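(* Let $Q:(-\infty,-1)\to(-\infty,0)$ be the inverse of the strictly increasing function $G\mapsto G-e^G$ on $(-\infty,0)$, and define $R:\mathbb{R}\to\mathbb{R}$ by $R(V)=-2(1-e^{Q(V)})^2$ for $V<-1$ and $R(V)=4(V+1)$ for $V\ge -1$. Fix $m<-1$. For $n\in\mathbb{R}$ let $V(t;n)$ denote the unique solution of the initial value problem $$V''+3V'=R(V),\ t>0,\qquad V(0)=m,\quad V'(0)=n,$$ (prime denoting $d/dt$, and $V_t=dV/dt$), defined on its interval of existence. Define $\beta^-=\{n\in\mathbb{R}: \text{there exists } t>0 \text{ with } V_t(t;n)<0\}$, $\beta^0=\{n\in\mathbb{R}: V_t(t;n)>0 \text{ and } V(t;n)\le -1 \text{ for all } t>0\}$, $\beta^+=\{n\in\mathbb{R}: V_t(t;n)>0 \text{ for all } t\ge 0 \text{ and } V(t;n)>-1 \text{ for some } t>0\}$. Then $\mathbb{R}$ is the disjoint union $\mathbb{R}=\beta^-\cup\beta^0\cup\beta^+$.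
   Context: The function $R$ is differentiable on $\mathbb{R}$. *)

From Stdlib Require Import Reals.
From Coquelicot Require Import Coquelicot.
Open Scope R_scope.

Definition Rfun (Q : R -> R) (V : R) : R :=
  if Rlt_dec V (-1) then -2 * (1 - exp (Q V)) ^ 2 else 4 * (V + 1).

Definition is_Q (Q : R -> R) : Prop :=
  forall V, V < -1 -> Q V < 0 /\ Q V - exp (Q V) = V.

(* (V, W) solves V'' + 3V' = R(V) on (0,T), V(0) = m, V'(0) = n, with W = V'.
   V and W are continuous from the right at 0 (so V'(0)=n as a one-sided derivative). *)
Definition is_sol (Q : R -> R) (m n : R) (T : Rbar) (V W : R -> R) : Prop :=
  Rbar_lt (Finite 0) T /\
  V 0 = m /\ W 0 = n /\
  filterlim V (at_right 0) (locally m) /\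
  filterlim W (at_right 0) (locally n) /\
  (forall t, 0 < t -> Rbar_lt (Finite t) T ->
     is_derive V t (W t) /\ is_derive W t (Rfun Q (V t) - 3 * W t)).

Definition is_max_sol (Q : R -> R) (m n : R) (T : Rbar) (V W : R -> R) : Prop :=
  is_sol Q m n T V W /\
  (forall T2 V2 W2, is_sol Q m n T2 V2 W2 -> Rbar_le T2 T).

Definition beta_minus (T : R -> Rbar) (V W : R -> R -> R) (n : R) : Prop :=
  exists t, 0 < t /\ Rbar_lt (Finite t) (T n) /\ W n t < 0.

Definition beta_zero (T : R -> Rbar) (V W : R -> R -> R) (n : R) : Prop :=
  forall t, 0 < t -> Rbar_lt (Finite t) (T n) -> W n t > 0 /\ V n t <= -1.

Definition beta_plus (T : R -> Rbar) (V W : R -> R -> R) (n : R) : Prop :=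
  (forall t, 0 <= t -> Rbar_lt (Finite t) (T n) -> W n t > 0) /\
  (exists t, 0 < t /\ Rbar_lt (Finite t) (T n) /\ V n t > -1).

(* If V_t never becomes negative, then n > 0: for n < 0 this is immediate, and for
   n = 0 the force R(V) < 0 near V(0) = m < -1 pushes V_t below zero at once.  A zero
   of V_t at some t0 > 0 would then be a minimum of V_t, so V_t'(t0) = 0 forces
   R(V(t0)) = 0, i.e. V(t0) = -1; since |R(V)| <= 4|V + 1|, the energy
   ((V + 1)^2 + V_t^2) e^(17 t) is nondecreasing, vanishes at t0, and hence vanishes
   on (0, t0), contradicting V(0) = m < -1.  So V_t > 0 throughout, and whether V
   crosses -1 decides between beta^0 and beta^+. *)
From Stdlib Require Import Reals Lra Psatz Classical.
From Coquelicot Require Import Coquelicot.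
Open Scope R_scope.

Lemma at_right_0_Rabs (f : R -> R) l :
  filterlim f (at_right 0) (locally l) ->
  forall eps, 0 < eps -> exists d, 0 < d /\ forall t, 0 < t < d -> Rabs (f t - l) < eps.
Proof.
  intros Hf eps Heps.
  destruct (proj1 (filterlim_locally f l) Hf (mkposreal eps Heps)) as [d Hd].
  exists d; split; [apply cond_pos|].
  intros t [Ht0 Htd]; apply (Hd t); [|exact Ht0].
  unfold ball; simpl; unfold AbsRing_ball, abs, minus, plus, opp; simpl.
  rewrite Ropp_0, Rplus_0_r, Rabs_right; lra.
Qed.

Lemma Rbar_lt_initial_segment (T : Rbar) (d : R) : Rbar_lt 0 T -> 0 < d ->
  exists e, 0 < e <= d /\ forall t, t <= e -> Rbar_lt t T.
Proof.
  intros HT Hd; destruct T as [r| |]; simpl in HT; try contradiction.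
  - exists (Rmin d (r / 2)); split.
    + split; [apply Rmin_glb_lt; lra | apply Rmin_l].
    + intros t Ht; simpl; pose proof (Rmin_r d (r / 2)); lra.
  - exists d; split; [lra | now intros].
Qed.

Lemma Rbar_lt_open_right (T : Rbar) (t0 : R) : Rbar_lt t0 T ->
  exists b, t0 < b /\ forall x, x < b -> Rbar_lt x T.
Proof.
  intros HT; destruct T as [r| |]; simpl in HT; try contradiction.
  - exists r; split; [lra | intros x Hx; simpl; lra].
  - exists (t0 + 1); split; [lra | now intros].
Qed.

Lemma MVT_derive_on (f df : R -> R) a b : a <= b ->
  (forall x, a <= x <= b -> is_derive f x (df x)) ->
  exists c, a <= c <= b /\ f b - f a = df c * (b - a).
Proof.
  intros Hab Hd.
  destruct (MVT_gen f a b df) as [c [Hc Hfc]];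
    rewrite ?Rmin_left, ?Rmax_right in * by lra.
  - intros x Hx; apply Hd; lra.
  - intros x Hx; apply derivable_continuous_pt; exists (df x).
    apply is_derive_Reals, Hd; lra.
  - exists c; split; [exact Hc | exact Hfc].
Qed.

Lemma is_derive_local_min f a b c l : is_derive f c l -> a < c -> c < b ->
  (forall x, a < x -> x < b -> f c <= f x) -> l = 0.
Proof.
  intros Hd Hac Hcb Hmin; apply is_derive_Reals in Hd.
  exact (deriv_minimum f a b c (exist _ l Hd) Hac Hcb Hmin).
Qed.

Lemma neg_of_right_lim_0_derive_le (f df : R -> R) e a : 0 < e -> 0 < a ->
  filterlim f (at_right 0) (locally 0) ->
  (forall x, 0 < x <= e -> is_derive f x (df x)) ->
  (forall x, 0 < x <= e -> df x <= - a) -> f e < 0.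
Proof.
  intros He Ha Hlim Hd Hdf.
  destruct (at_right_0_Rabs f 0 Hlim (a * e / 2) ltac:(nra)) as [d [Hd0 Hsmall]].
  set (s := Rmin d e / 2).
  assert (0 < Rmin d e) by (apply Rmin_glb_lt; lra).
  pose proof (Rmin_l d e); pose proof (Rmin_r d e).
  assert (Hfs : f s < a * e / 2).
  { specialize (Hsmall s ltac:(unfold s; lra)); apply Rabs_def2 in Hsmall; lra. }
  destruct (MVT_derive_on f df s e ltac:(unfold s; lra)) as [c [Hc Hfc]].
  { intros x Hx; apply Hd; unfold s in *; lra. }
  assert (df c * (e - s) <= - a * (e - s)).
  { apply Rmult_le_compat_r; [unfold s; lra | apply Hdf; unfold s in *; lra]. }
  unfold s in *; nra.
Qed.

Lemma exp_lt_1 q : q < 0 -> exp q < 1.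
Proof. intros; rewrite <- exp_0; apply exp_increasing; lra. Qed.

Lemma one_sub_exp_sqr_le q : q <= 0 -> (1 - exp q) ^ 2 <= 2 * (exp q - 1 - q).
Proof.
  intros Hq.
  set (f x := 4 * exp x - exp x * exp x - 3 - 2 * x).
  destruct (MVT_derive_on f (fun x => 4 * exp x - 2 * exp x * exp x - 2) q 0 Hq)
    as [c [_ Hc]].
  { intros x _; unfold f; auto_derive; auto; ring. }
  unfold f in Hc; rewrite exp_0 in Hc.
  pose proof (pow2_ge_0 (exp c - 1)); nra.
Qed.

Section Nonlinearity.
Variable Q : R -> R.
Hypothesis hQ : is_Q Q.

Lemma Rfun_neg v : v < -1 -> Rfun Q v < 0.
Proof.
  intros Hv; unfold Rfun; destruct (Rlt_dec v (-1)); [|lra].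
  pose proof (exp_lt_1 _ (proj1 (hQ v Hv))); nra.
Qed.

Lemma Rfun_pos v : v > -1 -> Rfun Q v > 0.
Proof. intros Hv; unfold Rfun; destruct (Rlt_dec v (-1)); lra. Qed.

Lemma Rfun_zero v : Rfun Q v = 0 -> v = -1.
Proof.
  intros H0; destruct (total_order_T v (-1)) as [[Hv|Hv]|Hv]; [|exact Hv|].
  - pose proof (Rfun_neg v Hv); lra.
  - pose proof (Rfun_pos v Hv); lra.
Qed.

Lemma Rfun_le_of_le c v : c < -1 -> v <= c -> Rfun Q v <= -2 * (1 - exp (c + 1)) ^ 2.
Proof.
  intros Hc Hv; unfold Rfun; destruct (Rlt_dec v (-1)) as [Hv1|]; [|lra].
  destruct (hQ v Hv1) as [HQneg HQv].
  pose proof (exp_lt_1 _ HQneg); pose proof (exp_lt_1 (c + 1) ltac:(lra)).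
  assert (exp (Q v) < exp (c + 1)) by (apply exp_increasing; lra).
  nra.
Qed.

Lemma Rfun_sqr_le v : Rfun Q v ^ 2 <= 16 * (v + 1) ^ 2.
Proof.
  unfold Rfun; destruct (Rlt_dec v (-1)) as [Hv|]; [|nra].
  destruct (hQ v Hv) as [HQneg HQv].
  pose proof (one_sub_exp_sqr_le (Q v) ltac:(lra)) as Hsq.
  pose proof (exp_lt_1 _ HQneg); pose proof (exp_pos (Q v)).
  set (a := 1 - exp (Q v)) in *; set (g := exp (Q v) - 1 - Q v) in *.
  replace (v + 1) with (- g) by (unfold g; lra).
  assert (a ^ 2 * a ^ 2 <= (2 * g) * (2 * g))
    by (apply Rmult_le_compat; pose proof (pow2_ge_0 a); lra).
  nra.
Qed.

End Nonlinearity.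

Lemma energy_derivative_nonneg u w r : r ^ 2 <= 16 * u ^ 2 ->
  0 <= 2 * u * w + 2 * w * (r - 3 * w) + 17 * (u ^ 2 + w ^ 2).
Proof. intros Hr; pose proof (pow2_ge_0 (u + w)); pose proof (pow2_ge_0 (w + r)); nra. Qed.

Section Solution.
Variables (Q : R -> R) (m n : R) (T : Rbar) (V W : R -> R).
Hypotheses (hQ : is_Q Q) (hm : m < -1) (hsol : is_sol Q m n T V W).

Lemma sol_V_lt_minus1_near_0 : exists d, 0 < d /\ forall t, 0 < t < d -> V t < -1.
Proof.
  destruct hsol as [_ [_ [_ [HVlim _]]]].
  destruct (at_right_0_Rabs V m HVlim (-1 - m) ltac:(lra)) as [d [Hd Hnear]].
  exists d; split; [exact Hd|].
  intros t Ht; specialize (Hnear t Ht); apply Rabs_def2 in Hnear; lra.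
Qed.

Lemma sol_not_at_rest_at_minus1 t0 : 0 < t0 -> Rbar_lt t0 T ->
  V t0 = -1 -> W t0 = 0 -> False.
Proof.
  intros Ht0 HT0 HV HW.
  destruct hsol as [_ [_ [_ [_ [_ Hd]]]]].
  set (h t := ((V t + 1) ^ 2 + W t ^ 2) * exp (17 * t)).
  assert (Hrest : forall t, 0 < t < t0 -> V t = -1).
  { intros t Ht.
    destruct (MVT_derive_on h (fun x =>
        (2 * (V x + 1) * W x + 2 * W x * (Rfun Q (V x) - 3 * W x)
         + 17 * ((V x + 1) ^ 2 + W x ^ 2)) * exp (17 * x)) t t0 ltac:(lra))
      as [c [Hc Hhc]].
    { intros x Hx.
      destruct (Hd x ltac:(lra) (Rbar_le_lt_trans x t0 T ltac:(simpl; lra) HT0)) as [DV DW].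
      unfold h; auto_derive; [repeat split; eexists; eauto|].
      replace (Derive (fun y => V y) x) with (W x) by (symmetry; now apply is_derive_unique).
      replace (Derive (fun y => W y) x) with (Rfun Q (V x) - 3 * W x)
        by (symmetry; now apply is_derive_unique).
      ring. }
    assert (Hh0 : h t0 = 0) by (unfold h; rewrite HV, HW; ring).
    assert (Hht : h t <= 0).
    { rewrite Hh0 in Hhc.
      pose proof (energy_derivative_nonneg (V c + 1) (W c) (Rfun Q (V c))
                    (Rfun_sqr_le Q hQ (V c))).
      pose proof (exp_pos (17 * c)).
      assert (0 <= (2 * (V c + 1) * W c + 2 * W c * (Rfun Q (V c) - 3 * W c)
                    + 17 * ((V c + 1) ^ 2 + W c ^ 2)) * exp (17 * c) * (t0 - t))
        by (apply Rmult_le_pos; [apply Rmult_le_pos|]; lra).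
      lra. }
    unfold h in Hht; pose proof (exp_pos (17 * t)).
    pose proof (pow2_ge_0 (V t + 1)); pose proof (pow2_ge_0 (W t)).
    assert ((V t + 1) ^ 2 <= 0) by nra.
    nra. }
  destruct sol_V_lt_minus1_near_0 as [d [Hd0 Hnear]].
  assert (0 < Rmin d t0) by (apply Rmin_glb_lt; lra).
  pose proof (Rmin_l d t0); pose proof (Rmin_r d t0).
  pose proof (Hnear (Rmin d t0 / 2) ltac:(lra)).
  rewrite (Hrest (Rmin d t0 / 2)) in * by lra; lra.
Qed.

Lemma sol_W_neg_of_n_nonpos : n <= 0 ->
  exists t, 0 < t /\ Rbar_lt t T /\ W t < 0.
Proof.
  intros Hn.
  destruct hsol as [HT [_ [_ [HVlim [HWlim Hd]]]]].
  destruct (Rlt_le_dec n 0) as [Hneg|Hnn].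
  { destruct (at_right_0_Rabs W n HWlim (- n) ltac:(lra)) as [d [Hd0 Hnear]].
    destruct (Rbar_lt_initial_segment T d HT Hd0) as [e [He HeT]].
    exists (e / 2); repeat split; [lra | apply HeT; lra|].
    specialize (Hnear (e / 2) ltac:(lra)); apply Rabs_def2 in Hnear; lra. }
  replace n with 0 in HWlim by lra.
  (* Near 0, V <= c < -1 makes the force at most -k, and W is too small to offset it. *)
  set (c := (m - 1) / 2); set (k := 2 * (1 - exp (c + 1)) ^ 2).
  assert (Hk : 0 < k) by (unfold k; pose proof (exp_lt_1 (c + 1) ltac:(unfold c; lra)); nra).
  destruct (at_right_0_Rabs V m HVlim (c - m) ltac:(unfold c; lra)) as [d1 [Hd1 HV1]].
  destruct (at_right_0_Rabs W 0 HWlim (k / 6) ltac:(lra)) as [d2 [Hd2 HW2]].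
  assert (0 < Rmin d1 d2) by (apply Rmin_glb_lt; lra).
  pose proof (Rmin_l d1 d2); pose proof (Rmin_r d1 d2).
  destruct (Rbar_lt_initial_segment T (Rmin d1 d2 / 2) HT ltac:(lra)) as [e [He HeT]].
  exists e; repeat split; [lra | apply HeT; lra|].
  apply (neg_of_right_lim_0_derive_le W (fun x => Rfun Q (V x) - 3 * W x) e (k / 2));
    [lra | lra | exact HWlim | |].
  - intros x Hx; apply (Hd x ltac:(lra)), HeT; lra.
  - intros x Hx.
    specialize (HV1 x ltac:(lra)); apply Rabs_def2 in HV1.
    specialize (HW2 x ltac:(lra)); apply Rabs_def2 in HW2.
    pose proof (Rfun_le_of_le Q hQ c (V x) ltac:(unfold c; lra) ltac:(lra)).
    unfold k in *; lra.
Qed.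

Lemma sol_W_pos_of_nonneg :
  (forall t, 0 < t -> Rbar_lt t T -> 0 <= W t) ->
  forall t, 0 < t -> Rbar_lt t T -> W t > 0.
Proof.
  intros Hge t0 Ht0 HT0.
  destruct (Rle_lt_dec (W t0) 0) as [Hle|Hlt]; [exfalso|exact Hlt].
  assert (HW : W t0 = 0) by (pose proof (Hge t0 Ht0 HT0); lra).
  destruct (Rbar_lt_open_right T t0 HT0) as [b [Hb HbT]].
  destruct hsol as [_ [_ [_ [_ [_ Hd]]]]].
  assert (Hforce : Rfun Q (V t0) - 3 * W t0 = 0).
  { apply (is_derive_local_min W 0 b t0); [apply Hd; auto | lra | lra |].
    intros x Hx0 Hxb; rewrite HW; apply Hge; auto. }
  rewrite HW in Hforce.
  apply (sol_not_at_rest_at_minus1 t0 Ht0 HT0); [|exact HW].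
  apply (Rfun_zero Q hQ); lra.
Qed.

End Solution.

Theorem lemma4p1 (Q : R -> R) (hQ : is_Q Q) (m : R) (hm : m < -1)
  (T : R -> Rbar) (V W : R -> R -> R)
  (hsol : forall n, is_max_sol Q m n (T n) (V n) (W n)) :
  forall n,
    (beta_minus T V W n \/ beta_zero T V W n \/ beta_plus T V W n) /\
    ~ (beta_minus T V W n /\ beta_zero T V W n) /\
    ~ (beta_minus T V W n /\ beta_plus T V W n) /\
    ~ (beta_zero T V W n /\ beta_plus T V W n).
Proof.
  intros n.
  assert (Hs : is_sol Q m n (T n) (V n) (W n)) by apply (proj1 (hsol n)).
  unfold beta_minus, beta_zero, beta_plus.
  split; [| split; [| split]].
  2: intros [[t [Ht [HtT HWt]]] Hzero]; destruct (Hzero t Ht HtT); lra.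
  2: intros [[t [Ht [HtT HWt]]] [Hpos _]]; specialize (Hpos t ltac:(lra) HtT); lra.
  2: intros [Hzero [_ [t [Ht [HtT HVt]]]]]; destruct (Hzero t Ht HtT); lra.
  destruct (classic (exists t, 0 < t /\ Rbar_lt t (T n) /\ W n t < 0)) as [Hneg|Hneg];
    [now left | right].
  assert (Hge : forall t, 0 < t -> Rbar_lt t (T n) -> 0 <= W n t).
  { intros t Ht HtT; apply Rnot_lt_le; intros HWt; apply Hneg; now exists t. }
  assert (Hn : 0 < n).
  { apply Rnot_le_lt; intros Hn; apply Hneg.
    exact (sol_W_neg_of_n_nonpos Q m n (T n) (V n) (W n) hQ hm Hs Hn). }
  pose proof (sol_W_pos_of_nonneg Q m n (T n) (V n) (W n) hQ hm Hs Hge) as Hpos.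
  destruct (classic (exists t, 0 < t /\ Rbar_lt t (T n) /\ V n t > -1)) as [Hcross|Hcross].
  - right; split; [|exact Hcross].
    intros t Ht HtT; destruct (Rle_lt_or_eq_dec 0 t Ht) as [Ht0|<-]; [now apply Hpos|].
    destruct Hs as [_ [_ [HW0 _]]]; rewrite HW0; lra.
  - left; intros t Ht HtT; split; [now apply Hpos|].
    apply Rnot_lt_le; intros HVt; apply Hcross; now exists t.
Qed.
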